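(* Let $k$ be a positive integer, $S\subset\mathbb{Z}$ a finite set, and $(X,\mathcal{X},\mu,T)$ an invertible measure preserving system. Assume the integers $e_{i,n,N}$ ($1\le i\le k$) take values in $S$. Then for any integer sequences $a_{i,N}(n)$, any complex numbers $c'_{n,N}$ with $|c'_{n,N}|\le1$ and any functions $f_{i,N}\in L^\infty(\mu)$ bounded by $1$, $$\Big\|\frac1N\sum_{n=1}^N c'_{n,N}T^{a_{1,N}(n)+e_{1,n,N}}f_{1,N}\cdots T^{a_{k,N}(n)+e_{k,n,N}}f_{k,N}\Big\|_{L^2(\mu)}\le C\sup_{|c_{n,N}|\le1}\ \sup_{\|f_2\|_\infty,\dots,\|f_k\|_\infty\le1}\Big\|\frac1N\sum_{n=1}^Nc_{n,N}T^{a_{1,N}(n)}f_{1,N}\cdot T^{a_{2,N}(n)}f_2\cdots T^{a_{k,N}(n)}f_k\Big\|_{L^2(\mu)},$$ where $C$ depends only on $k$ and $S$. As a consequence, there exist functions $f'_{2,N},\dots,f'_{k,N}$ bounded by $1$ such that the left-hand side is bounded by a constant (depending only on $k,S$) multiple of $$\sup_{|c_{n,N}|\le1}\Big\|\frac1N\sum_{n=1}^Nc_{n,N}T^{a_{1,N}(n)}f_{1,N}\cdot T^{a_{2,N}(n)}f'_{2,N}\cdots T^{a_{k,N}(n)}f'_{k,N}\Big\|_{L^2(\mu)}+o_N(1).$$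
   Context: $T^mf=f\circ T^m$. Suprema are over complex sequences and functions in $L^\infty(\mu)$. $o_N(1)$ denotes a quantity tending to $0$ as $N\to\infty$. *)

From HB Require Import structures.
From mathcomp Require Import all_boot all_order all_algebra.
From mathcomp Require Import all_classical all_reals all_analysis.
From mathcomp Require Import complex.
Set Implicit Arguments. Unset Strict Implicit. Unset Printing Implicit Defensive.
Import Order.TTheory GRing.Theory Num.Theory.
Local Open Scope ring_scope.
Local Open Scope classical_set_scope.

Section Defs.
Context {R : realType} {d : measure_display} {X : measurableType d}.

Definition cabs (z : R[i]) : R := Normc.normc z.

Definition cmeasurable (f : X -> R[i]) : Prop :=
  measurable_fun setT (fun x => complex.Re (f x)) /\
  measurable_fun setT (fun x => complex.Im (f x)).

(* f is an element of L^oo(mu) with ||f||_oo <= 1 (bounded representative) *)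
Definition bdd1 (f : X -> R[i]) : Prop :=
  cmeasurable f /\ forall x, cabs (f x) <= 1.

Definition L2norm (mu : {measure set X -> \bar R}) (F : X -> R[i]) : R :=
  Num.sqrt (Rintegral mu setT (fun x => cabs (F x) ^+ 2)).

Definition invertible_mps (mu : {measure set X -> \bar R})
    (T Tinv : X -> X) : Prop :=
  [/\ measurable_fun setT T, measurable_fun setT Tinv,
      cancel T Tinv, cancel Tinv T &
      forall A, measurable A -> mu (T @^-1` A) = mu A].

Definition Tpow (T Tinv : X -> X) (m : int) : X -> X :=
  match m with
  | Posz n => iter n T
  | Negz n => iter n.+1 Tinv
  end.

Definition avg (T Tinv : X -> X) (k N : nat) (c : nat -> R[i])
    (b : 'I_k -> nat -> int) (g : 'I_k -> X -> R[i]) : X -> R[i] :=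
  fun x => (N%:R)^-1 * \sum_(1 <= n < N.+1)
             c n * \prod_(i < k) g i (Tpow T Tinv (b i n) x).

End Defs.

From HB Require Import structures.
From mathcomp Require Import all_boot all_order all_algebra.
From mathcomp Require Import all_classical all_reals all_analysis.
From mathcomp Require Import complex measurable_realfun.
From mathcomp Require Import ring lra zify.
Import Order.TTheory GRing.Theory Num.Theory.
Local Open Scope ring_scope.
Local Open Scope classical_set_scope.

(* Split the indices n according to the vector s = (e_{1,n}, ..., e_{k,n}) of S^k.
   On the class of s, T^(a_i(n) + s_i) f_i = T^(s_1) (T^(a_i(n)) (T^(s_i - s_1) f_i)),
   so the average is a sum, over at most |S|^k classes, of averages of the restricted
   form (coefficients c'_n cut down to the class, f_i replaced by T^(s_i - s_1) f_i for
   i >= 2) composed with the measure preserving map T^(s_1).  Cauchy-Schwarz over the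
   classes and the invariance of mu give the first bound with C = |S|^k; the second
   follows by choosing, for each N, functions attaining the supremum up to 1/(N+1). *)

Lemma sqr_sum_le_card_sum_sqr {R : realFieldType} {J : finType} (a : J -> R) :
  (\sum_j a j) ^+ 2 <= #|J|%:R * \sum_j a j ^+ 2.
Proof.
have [J0|Jpos] := posnP #|J|.
  by rewrite J0 mul0r big_pred0 ?expr0n // => j; exact: card0_eq J0 j.
set s := \sum_j a j; set m : R := #|J|%:R.
have m_gt0 : 0 < m by rewrite ltr0n.
have : 0 <= \sum_j (m * a j - s) ^+ 2 by apply: sumr_ge0 => j _; exact: sqr_ge0.
have -> : \sum_j (m * a j - s) ^+ 2 = m * (m * \sum_j a j ^+ 2 - s ^+ 2).
  rewrite (eq_bigr (fun j => m ^+ 2 * a j ^+ 2 - (2 * m * s) * a j + s ^+ 2));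
    last by move=> j _; ring.
  rewrite big_split sumrB /= -!mulr_sumr -/s sumr_const -mulr_natr -/m.
  ring.
rewrite pmulr_rge0 //; lra.
Qed.

Section complex_modulus.
Context {R : realType}.
Implicit Types z w : R[i].

Lemma complex_ReM z w :
  complex.Re (z * w) = complex.Re z * complex.Re w - complex.Im z * complex.Im w.
Proof. by case: z; case: w. Qed.

Lemma complex_ImM z w :
  complex.Im (z * w) = complex.Re z * complex.Im w + complex.Im z * complex.Re w.
Proof. by case: z; case: w. Qed.

Lemma cabs_ge0 z : 0 <= cabs z.
Proof. by case: z => a b; exact: sqrtr_ge0. Qed.

Lemma sqr_cabs z : cabs z ^+ 2 = complex.Re z ^+ 2 + complex.Im z ^+ 2.
Proof. by case: z => a b; rewrite /cabs /Normc.normc sqr_sqrtr // addr_ge0 ?sqr_ge0. Qed.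

Lemma cabsM z w : cabs (z * w) = cabs z * cabs w.
Proof. exact: Normc.normcM. Qed.

Lemma cabs_sum (I : Type) (r : seq I) (P : pred I) (F : I -> R[i]) :
  cabs (\sum_(i <- r | P i) F i) <= \sum_(i <- r | P i) cabs (F i).
Proof.
elim/big_ind2: _ => [|z1 z2 w1 w2 h1 h2|//]; first by rewrite /cabs Normc.normc0.
exact: le_trans (le_normcD _ _) (lerD h1 h2).
Qed.

Lemma cabs_prod_le1 (I : Type) (r : seq I) (P : pred I) (F : I -> R[i]) :
  (forall i, cabs (F i) <= 1) -> cabs (\prod_(i <- r | P i) F i) <= 1.
Proof.
move=> F1; elim/big_ind: _ => [|z w hz hw|//]; first by rewrite /cabs Normc.normc1.
by rewrite cabsM mulr_ile1 ?cabs_ge0.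
Qed.

Lemma cabs_natrV (N : nat) : cabs (N%:R^-1 : R[i]) = N%:R^-1.
Proof. by rewrite /cabs Normc.normcV -[N%:R]/(1 *+ N) normcMn Normc.normc1. Qed.

End complex_modulus.

Section complex_measurable.
Context {R : realType} {d : measure_display} {X : measurableType d}.
Implicit Types F G : X -> R[i].

Lemma cmeasurable_cst (c : R[i]) : cmeasurable (fun _ : X => c).
Proof. by split; exact: measurable_cst. Qed.

Lemma cmeasurableD F G : cmeasurable F -> cmeasurable G ->
  cmeasurable (fun x => F x + G x).
Proof.
move=> [F1 F2] [G1 G2]; split.
- under eq_fun do rewrite raddfD /=; exact: measurable_funD.
- under eq_fun do rewrite raddfD /=; exact: measurable_funD.
Qed.

Lemma cmeasurableM F G : cmeasurable F -> cmeasurable G ->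
  cmeasurable (fun x => F x * G x).
Proof.
move=> [F1 F2] [G1 G2]; split.
- under eq_fun do rewrite complex_ReM.
  by apply: measurable_funB; exact: measurable_funM.
- under eq_fun do rewrite complex_ImM.
  by apply: measurable_funD; exact: measurable_funM.
Qed.

Lemma cmeasurable_comp (phi : X -> X) F : measurable_fun setT phi ->
  cmeasurable F -> cmeasurable (fun x => F (phi x)).
Proof.
by move=> mphi [F1 F2]; split;
  [exact: measurableT_comp F1 mphi | exact: measurableT_comp F2 mphi].
Qed.

Lemma cmeasurable_sum (I : Type) (r : seq I) (P : pred I) (F : I -> X -> R[i]) :
  (forall i, cmeasurable (F i)) -> cmeasurable (fun x => \sum_(i <- r | P i) F i x).
Proof.
move=> mF; elim: r => [|a r IH].
  by under eq_fun do rewrite big_nil; exact: cmeasurable_cst.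
by under eq_fun do rewrite big_cons; case: (P a) => //; exact: cmeasurableD.
Qed.

Lemma cmeasurable_prod (I : Type) (r : seq I) (P : pred I) (F : I -> X -> R[i]) :
  (forall i, cmeasurable (F i)) -> cmeasurable (fun x => \prod_(i <- r | P i) F i x).
Proof.
move=> mF; elim: r => [|a r IH].
  by under eq_fun do rewrite big_nil; exact: cmeasurable_cst.
by under eq_fun do rewrite big_cons; case: (P a) => //; exact: cmeasurableM.
Qed.

Lemma measurable_sqr_cabs F : cmeasurable F ->
  measurable_fun setT (fun x => cabs (F x) ^+ 2).
Proof.
move=> [F1 F2]; under eq_fun do rewrite sqr_cabs.
by apply: measurable_funD; exact: measurable_funX.
Qed.

Lemma bdd1_comp (phi : X -> X) F : measurable_fun setT phi -> bdd1 F ->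
  bdd1 (fun x => F (phi x)).
Proof. by move=> mphi [mF F1]; split => //; exact: cmeasurable_comp. Qed.

End complex_measurable.

Section iterates.
Context {d : measure_display} {X : measurableType d} {T Tinv : X -> X}.

Lemma measurable_Tpow : measurable_fun setT T -> measurable_fun setT Tinv ->
  forall m, measurable_fun setT (Tpow T Tinv m).
Proof.
move=> mT mTinv [] n /=.
- by elim: n => [|n IH] /=; [exact: measurable_id | exact: measurableT_comp].
- by elim: n => [|n IH] //=; exact: measurableT_comp.
Qed.

Hypotheses (TK : cancel T Tinv) (TinvK : cancel Tinv T).

Lemma Tpow_addr1 z x : Tpow T Tinv (z + 1) x = T (Tpow T Tinv z x).
Proof.
case: z => [n|[|n]]; first by rewrite (_ : Posz n + 1 = Posz n.+1) //; lia.
  by rewrite /= TinvK.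
have -> : Negz n.+1 + 1 = Negz n by rewrite !NegzE; lia.
by rewrite [in RHS]/Tpow [iter n.+2 _ _]/= TinvK.
Qed.

Lemma Tpow_subr1 z x : Tpow T Tinv (z - 1) x = Tinv (Tpow T Tinv z x).
Proof.
case: z => [[|n]|n] //; last by have -> : Negz n - 1 = Negz n.+1 by rewrite !NegzE; lia.
have -> : Posz n.+1 - 1 = Posz n by lia.
by rewrite [in RHS]/Tpow [iter n.+1 _ _]/= TK.
Qed.

Lemma TpowD m n x : Tpow T Tinv (m + n) x = Tpow T Tinv m (Tpow T Tinv n x).
Proof.
case: m => p.
- elim: p => [|p IH]; first by rewrite add0r.
  by rewrite (_ : Posz p.+1 + n = (Posz p + n) + 1) ?Tpow_addr1 ?IH //; lia.
- elim: p => [|p IH].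
    by rewrite (_ : Negz 0 + n = n - 1) ?Tpow_subr1 // NegzE; lia.
  by rewrite (_ : Negz p.+1 + n = (Negz p + n) - 1) ?Tpow_subr1 ?IH // !NegzE; lia.
Qed.

End iterates.

Section measure_preservation.
Context {R : realType} {d : measure_display} {X : measurableType d}.
Variable mu : {measure set X -> \bar R}.

Definition measure_preserving (phi : X -> X) :=
  measurable_fun setT phi /\ forall A, measurable A -> mu (phi @^-1` A) = mu A.

Lemma measure_preserving_iter phi n :
  measure_preserving phi -> measure_preserving (iter n phi).
Proof.
move=> [mphi phiP]; elim: n => [|n IH]; first by split => //; exact: measurable_id.
have [mphin phinP] := IH.
split; first exact: measurableT_comp mphi mphin.
move=> A mA; have mphiA : measurable (phi @^-1` A).
  by have := mphi measurableT A mA; rewrite setTI.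
by rewrite -[RHS]phiP // -[RHS]phinP.
Qed.

Lemma measure_preserving_Tpow T Tinv m : invertible_mps mu T Tinv ->
  measure_preserving (Tpow T Tinv m).
Proof.
move=> [mT mTinv TK TinvK TP].
have TinvP : measure_preserving Tinv.
  split=> // A mA; rewrite -TP; last by have := mTinv measurableT A mA; rewrite setTI.
  by congr (mu _); apply/seteqP; split => x; rewrite /preimage /= TK.
by case: m => n /=; apply: measure_preserving_iter.
Qed.

Lemma integral_measure_preserving phi (h : X -> \bar R) :
  measure_preserving phi -> measurable_fun setT h -> (forall x, 0 <= h x)%E ->
  (\int[mu]_x h (phi x) = \int[mu]_x h x)%E.
Proof.
move=> [mphi phiP] mh h0.
have := ge0_integral_pushforward mphi mu measurableT mh (in1W h0).
rewrite preimage_setT => <-.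
by apply: eq_measure_integral => A mA _; exact: phiP.
Qed.

End measure_preservation.

Section L2norm_bounds.
Context {R : realType} {d : measure_display} {X : measurableType d}.

Lemma bdd1_sqr_cabs_integral_fin_num (mu : {finite_measure set X -> \bar R})
    (F : X -> R[i]) :
  bdd1 F -> (\int[mu]_x (cabs (F x) ^+ 2)%:E)%E \is a fin_num.
Proof.
move=> [mF F1].
rewrite ge0_fin_numE; last by apply: integral_ge0 => x _; rewrite lee_fin sqr_ge0.
apply: (@le_lt_trans _ _ (\int[mu]_x (cst 1%E x))%E).
  apply: ge0_le_integral => //.
  - by move=> x _; rewrite lee_fin sqr_ge0.
  - exact/measurable_EFinP/measurable_sqr_cabs.
  - by move=> x _; rewrite lee_fin expr_le1 ?cabs_ge0.
by rewrite integral_cst // mul1e ltey_eq fin_num_measure.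
Qed.

Lemma integral_sqr_cabs_sum_comp_le (mu : {measure set X -> \bar R}) {J : finType}
    (G : J -> X -> R[i]) (phi : J -> X -> X) :
  (forall j, measure_preserving mu (phi j)) -> (forall j, cmeasurable (G j)) ->
  (\int[mu]_x (cabs (\sum_j G j (phi j x)) ^+ 2)%:E
   <= #|J|%:R%:E * \sum_j \int[mu]_x (cabs (G j x) ^+ 2)%:E)%E.
Proof.
move=> phiP mG; set m : R := #|J|%:R.
have msqGphi j : measurable_fun setT (fun x => cabs (G j (phi j x)) ^+ 2).
  apply: (measurableT_comp (f := fun y => cabs (G j y) ^+ 2)).
    exact: measurable_sqr_cabs.
  exact: (phiP j).1.
have intG j : (\int[mu]_x (cabs (G j (phi j x)) ^+ 2)%:E
               = \int[mu]_x (cabs (G j x) ^+ 2)%:E)%E.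
  apply: (integral_measure_preserving _ _ (fun y => (cabs (G j y) ^+ 2)%:E) (phiP j)).
  - exact/measurable_EFinP/measurable_sqr_cabs.
  - by move=> y; rewrite lee_fin sqr_ge0.
have pointwise x :
    cabs (\sum_j G j (phi j x)) ^+ 2 <= m * \sum_j cabs (G j (phi j x)) ^+ 2.
  apply: le_trans (sqr_sum_le_card_sum_sqr (fun j => cabs (G j (phi j x)))).
  rewrite lerXn2r ?nnegrE ?cabs_ge0 ?cabs_sum //.
  by apply: sumr_ge0 => j _; exact: cabs_ge0.
apply: (@le_trans _ _ (\int[mu]_x (m * \sum_j cabs (G j (phi j x)) ^+ 2)%:E)%E).
  apply: ge0_le_integral => //.
  - by move=> x _; rewrite lee_fin sqr_ge0.
  - apply/measurable_EFinP/measurable_sqr_cabs/cmeasurable_sum => j.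
    exact: cmeasurable_comp (phiP j).1 (mG j).
  - apply/measurable_EFinP/measurable_funM; first exact: measurable_cst.
    exact: measurable_sum.
  - by move=> x _; rewrite lee_fin pointwise.
under eq_integral do rewrite EFinM -sumEFin.
rewrite ge0_integralZl_EFin //; first last.
- by apply: emeasurable_sum => j; exact/measurable_EFinP.
- by move=> x _; apply: sume_ge0 => j _; rewrite lee_fin sqr_ge0.
rewrite ge0_integral_sum //; first last.
- by move=> j x _; rewrite lee_fin sqr_ge0.
- by move=> j; exact/measurable_EFinP.
by rewrite (eq_bigr _ (fun j _ => intG j)).
Qed.

(* The integrability hypothesis is not implied by the others: [L2norm] is built on
   [Rintegral], which is 0 on a divergent integral. *)
Lemma L2norm_sum_comp_le (mu : {measure set X -> \bar R}) {J : finType}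
    (G : J -> X -> R[i]) (phi : J -> X -> X) (r : R) :
  (forall j, measure_preserving mu (phi j)) -> (forall j, cmeasurable (G j)) ->
  (forall j, (\int[mu]_x (cabs (G j x) ^+ 2)%:E)%E \is a fin_num) ->
  0 <= r -> (forall j, L2norm mu (G j) <= r) ->
  L2norm mu (fun x => \sum_j G j (phi j x)) <= #|J|%:R * r.
Proof.
move=> phiP mG Gfin r0 Gr; set m : R := #|J|%:R.
have intG_le j : Rintegral mu setT (fun x => cabs (G j x) ^+ 2) <= r ^+ 2.
  have I0 : 0 <= Rintegral mu setT (fun x => cabs (G j x) ^+ 2).
    by apply: Rintegral_ge0 => x _; exact: sqr_ge0.
  by rewrite -(sqr_sqrtr I0) lerXn2r ?nnegrE ?sqrtr_ge0 ?Gr.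
have intF : (\int[mu]_x (cabs (\sum_j G j (phi j x)) ^+ 2)%:E
             <= (m * (m * r ^+ 2))%:E)%E.
  apply: le_trans (integral_sqr_cabs_sum_comp_le _ _ _ phiP mG) _.
  rewrite -(eq_bigr _ (fun j _ => fineK (Gfin j))) sumEFin -EFinM lee_fin.
  rewrite ler_wpM2l //; apply: le_trans (ler_sum _ (fun j _ => intG_le j)) _.
  by rewrite sumr_const -mulr_natr mulrC.
have Ffin : (\int[mu]_x (cabs (\sum_j G j (phi j x)) ^+ 2)%:E)%E \is a fin_num.
  rewrite ge0_fin_numE ?(le_lt_trans intF) ?ltry //.
  by apply: integral_ge0 => x _; rewrite lee_fin sqr_ge0.
rewrite /L2norm -(ger0_norm (mulr_ge0 (ler0n _ _) r0)) -sqrtr_sqr ler_sqrt ?sqr_ge0 //.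
have -> : (m * r) ^+ 2 = m * (m * r ^+ 2) by ring.
exact: (fine_le Ffin _ intF).
Qed.

End L2norm_bounds.

Section averages.
Context {R : realType} {d : measure_display} {X : measurableType d}.
Context {T Tinv : X -> X} {k : nat}.
Variable N : nat.

Lemma bdd1_avg (c : nat -> R[i]) (b : 'I_k -> nat -> int) (g : 'I_k -> X -> R[i]) :
  measurable_fun setT T -> measurable_fun setT Tinv ->
  (forall n, cabs (c n) <= 1) -> (forall i, bdd1 (g i)) -> bdd1 (avg T Tinv N c b g).
Proof.
move=> mT mTinv c1 g1; split.
  apply: cmeasurableM; first exact: cmeasurable_cst.
  apply: cmeasurable_sum => n; apply: cmeasurableM; first exact: cmeasurable_cst.
  apply: cmeasurable_prod => i; apply: cmeasurable_comp (g1 i).1.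
  exact: measurable_Tpow.
move=> x; rewrite /avg cabsM cabs_natrV.
apply: (@le_trans _ _ (N%:R^-1 * \sum_(1 <= n < N.+1) (1 : R))).
  rewrite ler_wpM2l ?invr_ge0 ?ler0n //.
  apply: le_trans (cabs_sum _ _ _ _) _; apply: ler_sum => n _.
  by rewrite cabsM mulr_ile1 ?cabs_ge0 ?c1 ?cabs_prod_le1 // => i; exact: (g1 i).2.
rewrite sumr_const_nat subn1.
by case: N => [|n]; rewrite ?invr0 ?mul0r // mulVf.
Qed.

Hypotheses (TK : cancel T Tinv) (TinvK : cancel Tinv T).

Lemma avg_decomposition (c : nat -> R[i]) (a : 'I_k -> nat -> int)
    (f : 'I_k -> X -> R[i]) {J : finType} (cls : nat -> J)
    (s : J -> 'I_k -> int) (i0 : 'I_k) :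
  nat_of_ord i0 = 0%N ->
  avg T Tinv N c (fun i n => a i n + s (cls n) i) f =1
  (fun x => \sum_j avg T Tinv N (fun n => if cls n == j then c n else 0) a
     (fun i => if nat_of_ord i == 0%N then f i
               else fun y => f i (Tpow T Tinv (s j i - s j i0) y))
     (Tpow T Tinv (s j i0) x)).
Proof.
move=> i0E x; rewrite /avg -mulr_sumr; congr (_ * _).
rewrite exchange_big /=; apply: eq_bigr => n _.
rewrite (bigD1 (cls n)) //= [X in _ = _ + X]big1 ?addr0; last first.
  by move=> j /negbTE nj; rewrite eq_sym nj mul0r.
rewrite eqxx; congr (_ * _); apply: eq_bigr => i _.
case: ifP => [/eqP iE|_]; rewrite -!(TpowD TK TinvK).
  by have -> : i = i0 by apply: val_inj; rewrite /= iE i0E.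
by congr (f i (Tpow T Tinv _ x)); lia.
Qed.

End averages.

Lemma ereal_sup_approx {R : realType} {E : set (\bar R)} {x C eps : R} :
  0 < C -> 0 < eps -> (x%:E <= C%:E * ereal_sup E)%E ->
  exists2 y, E y & (x%:E <= C%:E * (y + eps%:E))%E.
Proof.
move=> C_gt0 eps_gt0 xE.
have : ((x / C - eps)%:E < ereal_sup E)%E.
  move: xE; case: (ereal_sup E) => [r||] xE.
  - rewrite -EFinM lee_fin in xE.
    have : x / C <= r by rewrite ler_pdivrMr // mulrC.
    rewrite lte_fin; lra.
  - exact: ltry.
  - by move: xE; rewrite gt0_muleNy ?lte_fin // leeNy_eq.
move=> /ereal_sup_gt[y Ey lt_y]; exists y => //.
have -> : x = C * ((x / C - eps) + eps) by rewrite subrK mulrC divfK ?gt_eqF.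
rewrite EFinM EFinD; apply: lee_wpmul2l; first by rewrite lee_fin ltW.
by apply: leeD2r; exact: ltW.
Qed.

Section shifted_averages.
Context {R : realType} {d : measure_display} {X : measurableType d}.

Definition avg_sup (mu : {measure set X -> \bar R}) (T Tinv : X -> X)
    {k : nat} (N : nat) (a : 'I_k -> nat -> int) (f : 'I_k -> X -> R[i]) : \bar R :=
  ereal_sup [set (L2norm mu (avg T Tinv N cg.1 a
                   (fun i => if nat_of_ord i == 0%N then f i else cg.2 i)))%:E
            | cg in [set cg : (nat -> R[i]) * ('I_k -> X -> R[i]) |
                     (forall n, cabs (cg.1 n) <= 1) /\ (forall i, bdd1 (cg.2 i))]].

Definition avg_coef_sup (mu : {measure set X -> \bar R}) (T Tinv : X -> X)
    {k : nat} (N : nat) (a : 'I_k -> nat -> int) (f g : 'I_k -> X -> R[i]) : \bar R :=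
  ereal_sup [set (L2norm mu (avg T Tinv N c a
                   (fun i => if nat_of_ord i == 0%N then f i else g i)))%:E
            | c in [set c : nat -> R[i] | forall n, cabs (c n) <= 1]].

Context {mu : probability X R} {T Tinv : X -> X} {k : nat} (N : nat) {S : seq int}.
Context {e : 'I_k -> nat -> int} (a : 'I_k -> nat -> int) {c : nat -> R[i]}.
Context {f : 'I_k -> X -> R[i]}.
Hypotheses (k_gt0 : (0 < k)%N) (TP : invertible_mps mu T Tinv).
Hypotheses (eS : forall i n, e i n \in S) (c1 : forall n, cabs (c n) <= 1).
Hypothesis f1 : forall i, bdd1 (f i).

Lemma L2norm_avg_shift_le :
  ((L2norm mu (avg T Tinv N c (fun i n => a i n + e i n) f))%:E
   <= (size S ^ k)%:R%:E * avg_sup mu T Tinv N a f)%E.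
Proof.
have [mT mTinv TK TinvK _] := TP.
pose i0 : 'I_k := Ordinal k_gt0.
pose J := {ffun 'I_k -> 'I_(size S)}.
have index_eS i n : (index (e i n) S < size S)%N by rewrite index_mem.
pose cls n : J := [ffun i => Ordinal (index_eS i n)].
pose s (j : J) i : int := nth 0 S (j i).
have clsE : (fun i n => a i n + e i n) = (fun i n => a i n + s (cls n) i).
  by apply/funext => i; apply/funext => n; rewrite /s ffunE nth_index.
pose cj (j : J) n := if cls n == j then c n else 0.
pose gj j i y := f i (Tpow T Tinv (s j i - s j i0) y).
pose G (j : J) :=
  avg T Tinv N (cj j) a (fun i => if nat_of_ord i == 0%N then f i else gj j i).
have cj1 j n : cabs (cj j n) <= 1.
  by rewrite /cj; case: ifP => _; rewrite ?c1 // /cabs Normc.normc0.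
have gj1 j i : bdd1 (gj j i) by apply: bdd1_comp (f1 i); exact: measurable_Tpow.
have G1 j : bdd1 (G j).
  by apply: bdd1_avg => // i; case: ifP => _; [exact: f1 | exact: gj1].
have G_sup j : ((L2norm mu (G j))%:E <= avg_sup mu T Tinv N a f)%E.
  apply: ereal_sup_ubound; exists (cj j, gj j) => //.
  by split => [n|i]; [exact: cj1 | exact: gj1].
have J_gt0 : (0 < #|J|)%N by apply/card_gt0P; exists (cls 0%N).
rewrite clsE (funext (avg_decomposition N TK TinvK c a f cls s i0 erefl)).
have -> : (size S ^ k)%N = #|J| by rewrite card_ffun !card_ord.
move: G_sup; case: (avg_sup mu T Tinv N a f) => [r||] G_r.
- have r0 : 0 <= r.
    by rewrite -lee_fin (le_trans _ (G_r (cls 0%N))) // lee_fin sqrtr_ge0.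
  rewrite -EFinM lee_fin.
  apply: (L2norm_sum_comp_le mu G (fun j => Tpow T Tinv (s j i0))) => // j.
  + exact: measure_preserving_Tpow.
  + exact: (G1 j).1.
  + exact: bdd1_sqr_cabs_integral_fin_num.
- by rewrite gt0_muley ?leey // lte_fin ltr0n.
- by have := G_r (cls 0%N); rewrite leeNy_eq.
Qed.

Lemma L2norm_avg_shift_le_approx (eps : R) : 0 < eps ->
  exists g : 'I_k -> X -> R[i], (forall i, bdd1 (g i)) /\
    ((L2norm mu (avg T Tinv N c (fun i n => a i n + e i n) f))%:E
     <= (size S ^ k)%:R%:E * (avg_coef_sup mu T Tinv N a f g + eps%:E))%E.
Proof.
move=> eps_gt0.
have S_gt0 : (0 < size S)%N.
  by rewrite -has_predT; apply/hasP; exists (e (Ordinal k_gt0) 0%N).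
have C_gt0 : 0 < (size S ^ k)%:R :> R by rewrite ltr0n expn_gt0 S_gt0.
have [_ [[c' g] [c'1 g1] <-] le_sup] :=
  ereal_sup_approx C_gt0 eps_gt0 L2norm_avg_shift_le.
exists g; split => //; apply: le_trans le_sup _.
apply: lee_wpmul2l; first by rewrite lee_fin ltW.
by apply: leeD2r; apply: ereal_sup_ubound; exists c'.
Qed.

End shifted_averages.

(* Index 0 of 'I_k plays the role of the paper's index 1. *)
Theorem lemma3p2 (R : realType) (k : nat) (S : seq int) (hk : (0 < k)%N) :
  (exists C : R,
    forall (d : measure_display) (X : measurableType d)
      (mu : probability X R) (T Tinv : X -> X),
    invertible_mps mu T Tinv ->
    forall (e : 'I_k -> nat -> nat -> int)
      (a : 'I_k -> nat -> nat -> int)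
      (c' : nat -> nat -> R[i]) (f : nat -> 'I_k -> X -> R[i]),
    (forall i n N, e i n N \in S) ->
    (forall N n, cabs (c' N n) <= 1) ->
    (forall N i, bdd1 (f N i)) ->
    forall N : nat,
      ((L2norm mu (avg T Tinv N (c' N)
                     (fun i n => a i N n + e i n N) (f N)))%:E
       <= C%:E * ereal_sup
            [set (L2norm mu (avg T Tinv N cg.1 (fun i n => a i N n)
                   (fun i => if nat_of_ord i == 0%N then f N i else cg.2 i)))%:E
            | cg in [set cg : (nat -> R[i]) * ('I_k -> X -> R[i]) |
                     (forall n, (cabs (cg.1 n) <= 1)%R) /\
                     (forall i, bdd1 (cg.2 i)) ]])%E) /\
  (exists C' : R,
    forall (d : measure_display) (X : measurableType d)
      (mu : probability X R) (T Tinv : X -> X),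
    invertible_mps mu T Tinv ->
    forall (e : 'I_k -> nat -> nat -> int)
      (a : 'I_k -> nat -> nat -> int)
      (c' : nat -> nat -> R[i]) (f : nat -> 'I_k -> X -> R[i]),
    (forall i n N, e i n N \in S) ->
    (forall N n, cabs (c' N n) <= 1) ->
    (forall N i, bdd1 (f N i)) ->
    exists (f' : nat -> 'I_k -> X -> R[i]) (eps : nat -> R),
      (forall N i, bdd1 (f' N i)) /\
      eps @ \oo --> 0 /\
      forall N : nat,
        ((L2norm mu (avg T Tinv N (c' N)
                       (fun i n => a i N n + e i n N) (f N)))%:E
         <= C'%:E * (ereal_sup
              [set (L2norm mu (avg T Tinv N c (fun i n => a i N n)
                     (fun i => if nat_of_ord i == 0%N then f N i else f' N i)))%:E
              | c in [set c : nat -> R[i] | forall n, (cabs (c n) <= 1)%R]]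
              + (eps N)%:E))%E).
Proof.
split; exists (size S ^ k)%:R => d X mu T Tinv TP e a c' f eS c'1 f1.
  by move=> N; exact: L2norm_avg_shift_le.
have /choice[f' f'P] := fun N => L2norm_avg_shift_le_approx N (fun i n => a i N n)
  hk TP (fun i n => eS i n N) (c'1 N) (f1 N) _ (harmonic_gt0 N).
exists f', harmonic; split; first by move=> N i; exact: (f'P N).1.
by split; [exact: cvg_harmonic | move=> N; exact: (f'P N).2].
Qed.
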